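(* Let $R$ be a commutative ring with $\mathbb{Q}\subseteq R$, $\mathcal{A}$ a commutative unital $R$-algebra, and $\mathcal{E}$ a finitely generated projective $\mathcal{A}$-module with a symmetric, strongly nondegenerate, full $\mathcal{A}$-bilinear form $\langle\cdot,\cdot\rangle$. Let $[\cdot,\cdot]$ be the bracket on $\mathcal{C}^\bullet(\mathcal{E})$ described in the context. Then there exists a unique associative, graded commutative, $R$-bilinear product $\wedge$ of degree zero on $\mathcal{C}^\bullet(\mathcal{E})$ with the following properties: - $a\wedge b=ab=b\wedge a$ for $a,b\in\mathcal{A}$; - $a\wedge x=ax=x\wedge a$ for $a\in\mathcal{A}$, $x\in\mathcal{E}$; - $[\mathsf{C}_1\wedge\mathsf{C}_2,x]=(-1)^s[\mathsf{C}_1,x]\wedge\mathsf{C}_2+\mathsf{C}_1\wedge[\mathsf{C}_2,x]$ for all $\mathsf{C}_1\in\mathcal{C}^r(\mathcal{E})$, $\mathsf{C}_2\in\mathcal{C}^s(\mathcal{E})$, $x\in\mathcal{E}$.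
   Context: Strongly nondegenerate: $\mathcal{E}\to\operatorname{Hom}_{\mathcal{A}}(\mathcal{E},\mathcal{A})$ is an isomorphism. Full: every $a\in\mathcal{A}$ is a finite sum $\sum_i\langle x_i,y_i\rangle$. $\operatorname{Der}(\mathcal{A})$: $R$-linear derivations of $\mathcal{A}$. $\mathcal{C}^0(\mathcal{E})=\mathcal{A}$ and $\mathcal{C}^1(\mathcal{E})=\mathcal{E}$. For $r\ge2$, $\mathcal{C}^r(\mathcal{E})$ is the set of $\mathsf{C}\in\operatorname{Hom}_R(\mathcal{E}^{\otimes_R(r-1)},\mathcal{E})$ admitting an $R$-multilinear symbol $\sigma_{\mathsf{C}}:\mathcal{E}^{\otimes(r-2)}\to\operatorname{Der}(\mathcal{A})$ with two properties: (1) $\sigma_{\mathsf{C}}(x_1,\dots,x_{r-2})\langle u,w\rangle=\langle\mathsf{C}(x_1,\dots,x_{r-2},u),w\rangle+\langle u,\mathsf{C}(x_1,\dots,x_{r-2},w)\rangle$; (2) for $r\ge3$ and $1\le i\le r-2$, $\langle\mathsf{C}(\dots,x_i,x_{i+1},\dots)+\mathsf{C}(\dots,x_{i+1},x_i,\dots),u\rangle=\sigma_{\mathsf{C}}(x_1,\dots,\widehat{x_i},\widehat{x_{i+1}},\dots,x_{r-1},u)\langle x_i,x_{i+1}\rangle$. $\mathcal{C}^\bullet(\mathcal{E})=\bigoplus_r\mathcal{C}^r(\mathcal{E})$. $i_x\mathsf{C}$ inserts $x$ into the first argument of $\mathsf{C}\in\mathcal{C}^r$, $r\ge2$. $[\cdot,\cdot]$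 is the unique $R$-bilinear graded skew-symmetric map $\mathcal{C}^r\times\mathcal{C}^s\to\mathcal{C}^{r+s-2}$ with: - $[a,b]=0$ and $[a,x]=0=[x,a]$; - $[x,y]=\langle x,y\rangle$; - $[\mathsf{D},a]=\sigma_{\mathsf{D}}(a)=-[a,\mathsf{D}]$ for $\mathsf{D}\in\mathcal{C}^2$; - $[\mathsf{C},x]=i_x\mathsf{C}=(-1)^{r+1}[x,\mathsf{C}]$ for $\mathsf{C}\in\mathcal{C}^r$ with $r\ge2$; - $[[\mathsf{C}_1,\mathsf{C}_2],x]=(-1)^s[[\mathsf{C}_1,x],\mathsf{C}_2]+[\mathsf{C}_1,[\mathsf{C}_2,x]]$. *)

From HB Require Import structures.
From mathcomp Require Import all_boot all_order all_algebra.
Set Implicit Arguments. Unset Strict Implicit. Unset Printing Implicit Defensive.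
Import Order.TTheory GRing.Theory Num.Theory.
Local Open Scope ring_scope.

(* R contains Q: every positive integer is invertible in R. *)
Definition Qalgebra (R : comUnitRingType) : Prop :=
  forall n : nat, (0 < n)%N -> (n%:R : R) \is a GRing.unit.

(* Finitely generated projective A-module: a direct summand of A^n. *)
Definition fgprojective (A : comNzRingType) (E : lmodType A) : Prop :=
  exists (n : nat) (i : E -> 'rV[A]_n) (p : 'rV[A]_n -> E),
    (forall (a : A) x y, i (a *: x + y) = a *: i x + i y) /\
    (forall (a : A) v w, p (a *: v + w) = a *: p v + p w) /\
    (forall x, p (i x) = x).

(* The carrier in which the direct sum C^.(E) lives:
   an element is a pair (c0, F) where c0 : A is the degree-0 component and,
   for k >= 0, the restriction of F : seq E -> E to lists of length k is the
   degree-(k+1) component (an (R-multilinear) map E^(k) -> E; degree 1 = E,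
   viewed as the value F [::]). *)
Definition Raw (A : Type) (E : Type) : Type := (A * (seq E -> E))%type.

Section Cochains.
Variables (R : comUnitRingType) (A : comAlgType R) (E : lmodType A).
Variable g : E -> E -> A.

Definition Rsc (c : R) (x : E) : E := (c%:A : A) *: x.

Definition Alinear (f : E -> A) : Prop :=
  forall (a : A) x y, f (a *: x + y) = a * f x + f y.

Definition form_bilinear : Prop :=
  (forall (a : A) x y z, g (a *: x + y) z = a * g x z + g y z) /\
  (forall (a : A) x y z, g z (a *: x + y) = a * g z x + g z y).

Definition form_symmetric : Prop := forall x y, g x y = g y x.

(* x |-> <x, .> is a bijection E -> Hom_A(E, A) *)
Definition strongly_nondegenerate : Prop :=
  (forall x y, (forall z, g x z = g y z) -> x = y) /\
  (forall f : E -> A, Alinear f -> exists x, forall z, f z = g x z).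

Definition form_full : Prop :=
  forall a : A, exists s : seq (E * E), a = \sum_(p <- s) g p.1 p.2.

Definition derivation (d : A -> A) : Prop :=
  (forall (c : R) a b, d (c%:A * a + b) = c%:A * d a + d b) /\
  (forall a b, d (a * b) = d a * b + a * d b).

Definition multilin_E (n : nat) (F : seq E -> E) : Prop :=
  forall (l1 l2 : seq E) (c : R) (x y : E), (size l1 + size l2).+1 = n ->
    F (l1 ++ (Rsc c x + y) :: l2) = Rsc c (F (l1 ++ x :: l2)) + F (l1 ++ y :: l2).

Definition multilin_D (n : nat) (s : seq E -> A -> A) : Prop :=
  forall (l1 l2 : seq E) (c : R) (x y : E) (a : A), (size l1 + size l2).+1 = n ->
    s (l1 ++ (Rsc c x + y) :: l2) a
      = c%:A * s (l1 ++ x :: l2) a + s (l1 ++ y :: l2) a.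

(* s is a symbol for the degree-r cochain F (r >= 2): conditions (1), (2) *)
Definition symbol_of (r : nat) (F : seq E -> E) (s : seq E -> A -> A) : Prop :=
  multilin_D (r - 2) s /\
  (forall l, (size l).+2 = r -> derivation (s l)) /\
  (forall l u w, (size l).+2 = r ->
     s l (g u w) = g (F (rcons l u)) w + g u (F (rcons l w))) /\
  (forall l1 l2 x y u, (size l1 + size l2).+3 = r ->
     g (F (l1 ++ x :: y :: l2) + F (l1 ++ y :: x :: l2)) u
       = s (l1 ++ rcons l2 u) (g x y)).

Definition isC (r : nat) (u : Raw A E) : Prop :=
  if r is 0 then (forall l, u.2 l = 0)
  else u.1 = 0 /\ (forall l, (size l).+1 != r -> u.2 l = 0) /\
       ((2 <= r)%N -> multilin_E (r - 1) u.2 /\ exists s, symbol_of r u.2 s).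

Definition inCdot (u : Raw A E) : Prop :=
  (exists N, forall l, (N <= size l)%N -> u.2 l = 0) /\
  (forall k, isC k.+1 (0, fun l => if size l == k then u.2 l else 0)).

Definition inA (a : A) : Raw A E := (a, fun _ => 0).
Definition inE (x : E) : Raw A E := (0, fun l => if l is [::] then x else 0).
Definition rzero : Raw A E := (0, fun _ => 0).
Definition radd (u v : Raw A E) : Raw A E := (u.1 + v.1, fun l => u.2 l + v.2 l).
Definition rscale (c : R) (u : Raw A E) : Raw A E :=
  (c%:A * u.1, fun l => Rsc c (u.2 l)).
Definition ropp (u : Raw A E) : Raw A E := rscale (-1) u.
Definition ins (x : E) (u : Raw A E) : Raw A E := (0, fun l => u.2 (x :: l)).

Definition is_bracket (br : Raw A E -> Raw A E -> Raw A E) : Prop :=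
  (forall (c : R) u v w, inCdot u -> inCdot v -> inCdot w ->
     br (radd (rscale c u) v) w = radd (rscale c (br u w)) (br v w) /\
     br w (radd (rscale c u) v) = radd (rscale c (br w u)) (br w v)) /\
  (forall r s u v, isC r u -> isC s v -> isC (r + s - 2) (br u v)) /\
  (forall r s u v, isC r u -> isC s v ->
     br u v = rscale (- (-1) ^+ (r * s)) (br v u)) /\
  (forall a b, br (inA a) (inA b) = rzero) /\
  (forall a x, br (inA a) (inE x) = rzero /\ br (inE x) (inA a) = rzero) /\
  (forall x y, br (inE x) (inE y) = inA (g x y)) /\
  (forall D s a, isC 2 D -> symbol_of 2 D.2 s ->
     br D (inA a) = inA (s [::] a) /\ br D (inA a) = ropp (br (inA a) D)) /\
  (forall r C x, (2 <= r)%N -> isC r C ->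
     br C (inE x) = ins x C /\
     br C (inE x) = rscale ((-1) ^+ r.+1) (br (inE x) C)) /\
  (forall r s C1 C2 x, isC r C1 -> isC s C2 ->
     br (br C1 C2) (inE x)
       = radd (rscale ((-1) ^+ s) (br (br C1 (inE x)) C2))
              (br C1 (br C2 (inE x)))).

Definition is_wedge (br wd : Raw A E -> Raw A E -> Raw A E) : Prop :=
  (forall (c : R) u v w, inCdot u -> inCdot v -> inCdot w ->
     wd (radd (rscale c u) v) w = radd (rscale c (wd u w)) (wd v w) /\
     wd w (radd (rscale c u) v) = radd (rscale c (wd w u)) (wd w v)) /\
  (forall r s u v, isC r u -> isC s v -> isC (r + s) (wd u v)) /\
  (forall u v w, inCdot u -> inCdot v -> inCdot w ->
     wd (wd u v) w = wd u (wd v w)) /\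
  (forall r s u v, isC r u -> isC s v ->
     wd u v = rscale ((-1) ^+ (r * s)) (wd v u)) /\
  (forall a b, wd (inA a) (inA b) = inA (a * b) /\ wd (inA b) (inA a) = inA (a * b)) /\
  (forall a x, wd (inA a) (inE x) = inE (a *: x) /\ wd (inE x) (inA a) = inE (a *: x)) /\
  (forall r s C1 C2 x, isC r C1 -> isC s C2 ->
     br (wd C1 C2) (inE x)
       = radd (rscale ((-1) ^+ s) (wd (br C1 (inE x)) C2))
              (wd C1 (br C2 (inE x)))).

End Cochains.

(* The derivation rule for [_, x] forces the product. A cochain of degree at
   least 2 is determined by its contractions i_x C = [C, x], and the rule
   expresses i_x (C1 ∧ C2) through products of lower total degree, down to
   degrees 0 and 1 where the product is the module structure. This gives
   uniqueness by induction on the total degree and, read as a recursion on the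
   argument list, a definition of the product of homogeneous cochains, extended
   to C^•(E) by bilinearity. It preserves the cochain
   conditions: multilinearity is clear; the last-argument maps get symbols
   because derivations are stable under the combinations that appear; and the
   symmetry condition (2), written without the symbol, reduces to the
   symmetrized double contractions of the factors, which commute with further
   contractions by nondegeneracy of the form. *)

From Pilot Require Import Defs.
From HB Require Import structures.
From mathcomp Require Import all_boot all_order all_algebra.
From Stdlib Require Import FunctionalExtensionality IndefiniteDescription.
From mathcomp Require Import zify ring.
Set Implicit Arguments. Unset Strict Implicit. Unset Printing Implicit Defensive.
Import GRing.Theory.
Local Open Scope ring_scope.

Section Wedge.
Variables (R : comUnitRingType) (A : comAlgType R) (E : lmodType A).
Variable g : E -> E -> A.
Hypothesis g_bilinear : form_bilinear g.

Local Notation Raw := (Raw A E).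
Local Notation rz := (rzero E).

Lemma raw_ext (u v : Raw) : u.1 = v.1 -> (forall l, u.2 l = v.2 l) -> u = v.
Proof.
by case: u => a f; case: v => b h /= -> H; congr pair; exact: functional_extensionality.
Qed.

Lemma formDl x y z : g (x + y) z = g x z + g y z.
Proof. by have := g_bilinear.1 1 x y z; rewrite scale1r mul1r. Qed.
Lemma form0l z : g 0 z = 0.
Proof. by apply: (addrI (g 0 z)); rewrite -formDl !addr0. Qed.
Lemma formZl a x z : g (a *: x) z = a * g x z.
Proof. by have := g_bilinear.1 a x 0 z; rewrite addr0 form0l addr0. Qed.
Lemma formNl x z : g (- x) z = - g x z.
Proof. by rewrite -scaleN1r formZl mulN1r. Qed.
Lemma formRl c x z : g (Rsc c x) z = c%:A * g x z.
Proof. exact: formZl. Qed.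

Lemma formDr x y z : g z (x + y) = g z x + g z y.
Proof. by have := g_bilinear.2 1 x y z; rewrite scale1r mul1r. Qed.
Lemma form0r z : g z 0 = 0.
Proof. by apply: (addrI (g z 0)); rewrite -formDr !addr0. Qed.
Lemma formZr a x z : g z (a *: x) = a * g z x.
Proof. by have := g_bilinear.2 a x 0 z; rewrite addr0 form0r addr0. Qed.
Lemma formNr x z : g z (- x) = - g z x.
Proof. by rewrite -scaleN1r formZr mulN1r. Qed.
Lemma formRr c x z : g z (Rsc c x) = c%:A * g z x.
Proof. exact: formZr. Qed.

Lemma Rsc1 (x : E) : Rsc 1 x = x.
Proof. by rewrite /Rsc !scale1r. Qed.
Lemma Rsc0 c : Rsc c (0 : E) = 0.
Proof. exact: scaler0. Qed.
Lemma RscDr c (x y : E) : Rsc c (x + y) = Rsc c x + Rsc c y.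
Proof. exact: scalerDr. Qed.
Lemma RscM c d (x : E) : Rsc (c * d) x = Rsc c (Rsc d x).
Proof. by rewrite /Rsc scalerA mulr_algl -scalerA. Qed.
Lemma RscN c (x : E) : Rsc (- c) x = - Rsc c x.
Proof. by rewrite /Rsc !scaleNr. Qed.
Lemma RscN1 (x : E) : Rsc (-1) x = - x.
Proof. by rewrite RscN Rsc1. Qed.

Lemma rscale1 (u : Raw) : rscale (1 : R) u = u.
Proof. by apply: raw_ext => [|l] /=; rewrite ?Rsc1 // scale1r mul1r. Qed.

Lemma radd_idem (u : Raw) : radd u u = u -> u = rz.
Proof.
move=> H; apply: raw_ext => [|l] /=.
  by apply: (addIr u.1); rewrite add0r; exact: (congr1 fst H).
by apply: (addIr (u.2 l)); rewrite add0r; exact: (congr1 (fun w => w.2 l) H).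
Qed.

Lemma radd_rzero : radd rz rz = rz.
Proof. by apply: raw_ext => /= *; rewrite addr0. Qed.

Lemma sign_odd_eq m n : odd m = odd n -> (-1) ^+ m = (-1) ^+ n :> R.
Proof. by move=> Hmn; rewrite -signr_odd Hmn signr_odd. Qed.

Lemma signK n : (-1) ^+ n * (-1) ^+ n = 1 :> R.
Proof. by rewrite -exprD addnn -signr_odd odd_double. Qed.

(** * The homogeneous product *)

(* The bracket [u, x] of a cochain u of degree n with x, as fixed by the
   bracket axioms. *)
Definition contract (n : nat) (x : E) (u : Raw) : Raw :=
  match n with 0 => rz | 1 => inA E (g (u.2 [::]) x) | _ => ins x u end.

(* The value on the arguments l of the product of u of degree p and v of
   degree q: the derivation rule for [_, x], read as a recursion on the
   first argument x of l. *)
Fixpoint wedge_val (l : seq E) (p q : nat) (u v : Raw) {struct l} : E :=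
  match l with
  | [::] => if (p == 0)%N && (q == 1)%N then u.1 *: v.2 [::]
            else if (p == 1)%N && (q == 0)%N then v.1 *: u.2 [::] else 0
  | x :: l' => Rsc ((-1) ^+ q) (wedge_val l' p.-1 q (contract p x u) v)
               + wedge_val l' p q.-1 u (contract q x v)
  end.

Definition wedge_hom (p q : nat) (u v : Raw) : Raw :=
  (if (p == 0)%N && (q == 0)%N then u.1 * v.1 else 0, fun l => wedge_val l p q u v).

Definition homog (n : nat) (u : Raw) : Prop :=
  (n != 0%N -> u.1 = 0) /\ (forall l, (size l).+1 != n -> u.2 l = 0).

Lemma contract_rzero n x : contract n x rz = rz.
Proof. by case: n => [|[|n]] //=; rewrite form0l. Qed.

Lemma contract_radd n x u v : contract n x (radd u v) = radd (contract n x u) (contract n x v).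
Proof. by case: n => [|[|n]]; apply: raw_ext => //= *; rewrite ?addr0 ?formDl. Qed.

Lemma contract_rscale n x c u : contract n x (rscale c u) = rscale c (contract n x u).
Proof. by case: n => [|[|n]]; apply: raw_ext => //= *; rewrite ?mulr0 ?Rsc0 ?formRl. Qed.

Lemma homog_contract n x u : homog n u -> homog n.-1 (contract n x u).
Proof. by case: n => [|[|n]] [H1 H2]; split => //= l Hl; apply: H2. Qed.

Lemma wedge_val_rzerol l p q v : wedge_val l p q rz v = 0.
Proof.
elim: l p q v => [|x l IH] p q v /=; first by rewrite scale0r scaler0; do ?case: ifP.
by rewrite contract_rzero !IH Rsc0 addr0.
Qed.

Lemma wedge_val_rzeror l p q u : wedge_val l p q u rz = 0.
Proof.
elim: l p q u => [|x l IH] p q u /=; first by rewrite scale0r scaler0; do ?case: ifP.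
by rewrite contract_rzero !IH Rsc0 addr0.
Qed.

Lemma wedge_val_off l p q u v : (size l).+1 != (p + q)%N -> wedge_val l p q u v = 0.
Proof.
elim: l p q u v => [|x l IH] p q u v /=; first by case: p => [|[|p]]; case: q => [|[|q]].
move=> Hl; case: p Hl => [|p] Hl.
  by rewrite /= wedge_val_rzerol Rsc0 add0r IH //; case: q Hl => [|q] //=; lia.
rewrite IH /=; last by lia.
rewrite Rsc0 add0r; case: q Hl => [|q] Hl; first by rewrite /= wedge_val_rzeror.
by rewrite IH //=; lia.
Qed.

Lemma wedge_val_raddl l p q u1 u2 v :
  wedge_val l p q (radd u1 u2) v = wedge_val l p q u1 v + wedge_val l p q u2 v.
Proof.
elim: l p q u1 u2 v => [|x l IH] p q u1 u2 v /=.
  by case: ifP => _; [rewrite scalerDl | case: ifP => _; rewrite ?scalerDr ?addr0].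
by rewrite contract_radd !IH RscDr addrACA.
Qed.

Lemma wedge_val_raddr l p q u v1 v2 :
  wedge_val l p q u (radd v1 v2) = wedge_val l p q u v1 + wedge_val l p q u v2.
Proof.
elim: l p q u v1 v2 => [|x l IH] p q u v1 v2 /=.
  by case: ifP => _; [rewrite scalerDr | case: ifP => _; rewrite ?scalerDl ?addr0].
by rewrite contract_radd !IH RscDr addrACA.
Qed.

Lemma wedge_val_rscalel l p q c u v :
  wedge_val l p q (rscale c u) v = Rsc c (wedge_val l p q u v).
Proof.
elim: l p q u v => [|x l IH] p q u v /=.
  case: ifP => _; first by rewrite /Rsc scalerA mulr_algl.
  by case: ifP => _; rewrite ?Rsc0 // /Rsc !scalerA mulrC.
by rewrite contract_rscale !IH RscDr -!RscM mulrC.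
Qed.

Lemma wedge_val_rscaler l p q c u v :
  wedge_val l p q u (rscale c v) = Rsc c (wedge_val l p q u v).
Proof.
elim: l p q u v => [|x l IH] p q u v /=.
  case: ifP => _; first by rewrite /Rsc !scalerA mulrC.
  by case: ifP => _; rewrite ?Rsc0 // /Rsc scalerA mulr_algl.
by rewrite contract_rscale !IH RscDr -!RscM mulrC.
Qed.

Lemma wedge_val_deg0l l q u v : homog q v -> wedge_val l 0 q u v = u.1 *: v.2 l.
Proof.
elim: l q u v => [|x l IH] q u v Hv /=.
  by case: q Hv => [|[|q]] [_ H2] //=; rewrite H2 ?scaler0.
rewrite wedge_val_rzerol Rsc0 add0r IH; last exact: homog_contract.
by case: q Hv => [|[|q]] [_ H2] //=; rewrite ?H2 ?scaler0.
Qed.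

Lemma wedge_val_deg0r l p u v : homog p u -> wedge_val l p 0 u v = v.1 *: u.2 l.
Proof.
elim: l p u v => [|x l IH] p u v Hu /=.
  by case: p Hu => [|[|p]] [_ H2] //=; rewrite H2 ?scaler0.
rewrite wedge_val_rzeror addr0 expr0 Rsc1 IH; last exact: homog_contract.
by case: p Hu => [|[|p]] [_ H2] //=; rewrite ?H2 ?scaler0.
Qed.

Lemma homog_wedge_hom p q u v : homog (p + q) (wedge_hom p q u v).
Proof.
split => /= [|l Hl]; first by case: p => [|p] //; case: q.
by rewrite wedge_val_off.
Qed.

Lemma wedge_hom_rzerol p q v : wedge_hom p q rz v = rz.
Proof. by apply: raw_ext => /= *; rewrite ?wedge_val_rzerol ?mul0r //; case: ifP. Qed.

Lemma wedge_hom_rzeror p q u : wedge_hom p q u rz = rz.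
Proof. by apply: raw_ext => /= *; rewrite ?wedge_val_rzeror ?mulr0 //; case: ifP. Qed.

Lemma contract_wedge_hom p q x u v :
  contract (p + q) x (wedge_hom p q u v)
  = radd (rscale ((-1) ^+ q) (wedge_hom p.-1 q (contract p x u) v))
         (wedge_hom p q.-1 u (contract q x v)).
Proof.
case: p => [|[|p]]; case: q => [|[|q]]; apply: raw_ext => /= *.
all: rewrite ?wedge_val_rzerol ?wedge_val_rzeror ?mulr0 ?mul0r ?Rsc0 ?addr0 ?add0r ?formZl //.
all: by rewrite ?expr0 ?scale1r ?mul1r ?mulr0 ?Rsc1 1?mulrC // wedge_val_off.
Qed.

Lemma wedge_val_comm l p q u v :
  wedge_val l p q u v = Rsc ((-1) ^+ (p * q)) (wedge_val l q p v u).
Proof.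
elim: l p q u v => [|x l IH] p q u v.
  by case: p => [|[|p]]; case: q => [|[|q]] => /=; rewrite ?Rsc0 ?muln0 ?mul0n ?expr0 ?Rsc1.
rewrite /= [wedge_val l q.-1 _ _ _]IH [wedge_val l q p.-1 _ _]IH RscDr -!RscM addrC.
case: p => [|p].
  by rewrite /= !wedge_val_rzerol !Rsc0 !addr0 mul0n muln0 expr0 !mulr1 Rsc1.
case: q => [|q].
  by rewrite /= !wedge_val_rzeror !Rsc0 !add0r muln0 mul0n expr0 !mul1r Rsc1.
have -> : (-1) ^+ (p.+1 * q.+1) * (-1) ^+ p.+1 * (-1) ^+ (q.+1.-1 * p.+1) = 1 :> R.
  rewrite -!exprD (@sign_odd_eq _ 0) ?expr0 //= !oddD !oddM /=.
  by case: (odd p); case: (odd q).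
have -> : (-1) ^+ (p.+1 * q.+1) * (-1) ^+ (q.+1 * p.+1.-1) = (-1) ^+ q.+1 :> R.
  rewrite -!exprD; apply: sign_odd_eq; rewrite /= !oddD !oddM /=.
  by case: (odd p); case: (odd q).
by rewrite Rsc1.
Qed.

Lemma wedge_hom_comm p q u v :
  wedge_hom p q u v = rscale ((-1) ^+ (p * q)) (wedge_hom q p v u).
Proof.
apply: raw_ext => [|l] /=; last exact: wedge_val_comm.
case: p => [|p]; case: q => [|q] //=; rewrite ?mulr0 //.
by rewrite expr0 scale1r mul1r mulrC.
Qed.

Lemma wedge_val_assoc l p q r a b c :
  wedge_val l (p + q) r (wedge_hom p q a b) c = wedge_val l p (q + r) a (wedge_hom q r b c).
Proof.
elim: l p q r a b c => [|x l IH] p q r a b c.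
  case: p => [|[|p]]; case: q => [|[|q]]; case: r => [|[|r]] => /=;
  rewrite ?addSn ?addnS /= ?scaler0 ?scale0r ?mulr0 ?mul0r //.
  - by rewrite scalerA.
  - by rewrite !scalerA mulrC.
  - by rewrite scalerA mulrC.
rewrite /= contract_wedge_hom wedge_val_raddl wedge_val_rscalel.
rewrite contract_wedge_hom wedge_val_raddr wedge_val_rscaler !RscDr -!RscM -addrA.
congr (_ + _).
  case: p => [|p]; first by rewrite /= wedge_hom_rzerol !wedge_val_rzerol !Rsc0.
  by rewrite addSn /= IH exprD mulrC.
congr (_ + _).
  case: q => [|q].
    by rewrite /= wedge_hom_rzeror wedge_hom_rzerol wedge_val_rzerol wedge_val_rzeror !Rsc0.
  by rewrite addnS /= IH.
case: r => [|r]; first by rewrite /= wedge_hom_rzeror !wedge_val_rzeror.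
by rewrite addnS /= IH.
Qed.

Lemma wedge_hom_assoc p q r a b c :
  wedge_hom (p + q) r (wedge_hom p q a b) c = wedge_hom p (q + r) a (wedge_hom q r b c).
Proof.
apply: raw_ext => [|l] /=; last exact: wedge_val_assoc.
by case: p => [|p]; case: q => [|q]; case: r => [|r] //=; rewrite ?mulr0 ?mul0r // mulrA.
Qed.

Lemma addr_cross_cancel (V : zmodType) (a1 a2 b1 b2 c1 c2 : V) :
  (a1 - b1) + (b2 + c1) + ((a2 - b2) + (b1 + c2)) = a1 + a2 + (c1 + c2).
Proof.
rewrite addrACA (addrACA a1) (addrACA b2) -opprD (addrC b2) addrA.
by rewrite -[a1 + a2 - (b1 + b2) + (b1 + b2)]addrA addNr addr0.
Qed.

(** * Products of cochains are cochains *)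

Definition dcontract (n : nat) (x y : E) (u : Raw) : Raw :=
  radd (contract n.-1 y (contract n x u)) (contract n.-1 x (contract n y u)).

Lemma dcontract_small n x y u : (n < 2)%N -> dcontract n x y u = rz.
Proof. by case: n => [|[|n]] // _; apply: raw_ext => /= *; rewrite addr0. Qed.

Lemma wedge_val_symmetrize l p q x y u v :
  wedge_val (x :: y :: l) p q u v + wedge_val (y :: x :: l) p q u v
  = wedge_val l p.-2 q (dcontract p x y u) v + wedge_val l p q.-2 u (dcontract q x y v).
Proof.
rewrite /= /dcontract wedge_val_raddl wedge_val_raddr !RscDr -!RscM signK !Rsc1.
case: q => [|q]; first by rewrite /= !wedge_val_rzeror !Rsc0 !addr0.
by rewrite /= exprS mulN1r !RscN; exact: addr_cross_cancel.
Qed.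

Definition multilinear (F : seq E -> E) := forall l1 l2 c x y,
  F (l1 ++ (Rsc c x + y) :: l2) = Rsc c (F (l1 ++ x :: l2)) + F (l1 ++ y :: l2).

Definition has_symbol (D : E -> E) :=
  exists d : A -> A, derivation d /\ forall a b, d (g a b) = g (D a) b + g a (D b).

(* Condition (2), with its right-hand side expanded through condition (1) and
   the symmetry of the form, so that no symbol appears. *)
Definition swap_rule (l1 : seq E) (F : seq E -> E) := forall l2 x y w,
  g (F (l1 ++ x :: y :: l2) + F (l1 ++ y :: x :: l2)) w
  = g (F (l1 ++ l2 ++ [:: w; x])) y + g (F (l1 ++ l2 ++ [:: w; y])) x.

Definition cochain (n : nat) (u : Raw) :=
  [/\ homog n u, multilinear u.2, (forall l, has_symbol (fun z => u.2 (rcons l z)))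
    & (forall l1, swap_rule l1 u.2)].

Lemma has_symbol0 : has_symbol (fun _ => 0).
Proof.
exists (fun _ => 0); split; first by split => *; rewrite ?mulr0 ?mul0r ?addr0.
by move=> a b; rewrite form0l form0r addr0.
Qed.

Lemma has_symbol_ext D1 D2 : D1 =1 D2 -> has_symbol D1 -> has_symbol D2.
Proof. by move=> H [d [Hd H1]]; exists d; split => // a b; rewrite -!H. Qed.

Lemma has_symbol_comb c D1 D2 :
  has_symbol D1 -> has_symbol D2 -> has_symbol (fun z => Rsc c (D1 z) + D2 z).
Proof.
move=> [d1 [[L1 M1] H1]] [d2 [[L2 M2] H2]].
exists (fun a => c%:A * d1 a + d2 a); split; first split.
- by move=> c' a b; rewrite L1 L2; ring.
- by move=> a b; rewrite M1 M2; ring.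
by move=> a b; rewrite H1 H2 formDl formDr formRl formRr; ring.
Qed.

Lemma has_symbolZ (a0 : A) D : has_symbol D -> has_symbol (fun z => a0 *: D z).
Proof.
move=> [d [[L M] H]]; exists (fun a => a0 * d a); split; first split.
- by move=> c' a b; rewrite L; ring.
- by move=> a b; rewrite M; ring.
by move=> a b; rewrite H formZl formZr; ring.
Qed.

Lemma multilinear0 : multilinear (fun _ => 0).
Proof. by move=> *; rewrite Rsc0 addr0. Qed.

Lemma swap_rule0 l1 : swap_rule l1 (fun _ => 0).
Proof. by move=> *; rewrite addr0 !form0l addr0. Qed.

Lemma cochain_rzero n : cochain n rz.
Proof. by split=> [||l|l1]; [|exact: multilinear0|exact: has_symbol0|exact: swap_rule0]. Qed.

Lemma cochain_radd n u v : cochain n u -> cochain n v -> cochain n (radd u v).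
Proof.
case=> [[Hu1 Hu2] Fu Du Su] [[Hv1 Hv2] Fv Dv Sv]; split.
- split => /= [H|l Hl]; first by rewrite Hu1 ?Hv1 ?addr0.
  by rewrite Hu2 ?Hv2 ?addr0.
- by move=> l1 l2 c x y /=; rewrite Fu Fv RscDr addrACA.
- move=> l; apply: (has_symbol_ext _ (has_symbol_comb 1 (Du l) (Dv l))).
  by move=> z; rewrite Rsc1.
- move=> l1 l2 x y w /=.
  by rewrite [u.2 _ + v.2 _ + _]addrACA [LHS]formDl Su Sv !formDl addrACA.
Qed.

Lemma cochain_contract n x u : cochain n u -> cochain n.-1 (contract n x u).
Proof.
case: n => [|[|n]] [H F D S]; try exact: cochain_rzero.
  by split=> [||l|l1]; [|exact: multilinear0|exact: has_symbol0|exact: swap_rule0].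
split; first exact: (homog_contract x H).
- by move=> l1; exact: (F (x :: l1)).
- by move=> l; exact: (D (x :: l)).
- by move=> l1; exact: (S (x :: l1)).
Qed.

Lemma contract_linear n c x y u : multilinear u.2 ->
  contract n (Rsc c x + y) u = radd (rscale c (contract n x u)) (contract n y u).
Proof.
move=> F; case: n => [|[|n]]; apply: raw_ext => //= *; rewrite ?mulr0 ?Rsc0 ?addr0 //.
- by rewrite formDr formRr.
- exact: (F [::]).
Qed.

Lemma multilinear_contract n x u : multilinear u.2 -> multilinear (contract n x u).2.
Proof.
case: n => [|[|n]] F //=; try exact: multilinear0.
by move=> l1; exact: (F (x :: l1)).
Qed.

Lemma wedge_val_multilinear p q u v : multilinear u.2 -> multilinear v.2 ->
  multilinear (fun l => wedge_val l p q u v).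
Proof.
move=> Fu Fv l1; elim: l1 p q u v Fu Fv => [|z l1 IH] p q u v Fu Fv l2 c x y /=.
  rewrite !contract_linear // wedge_val_raddl wedge_val_raddr.
  by rewrite wedge_val_rscalel wedge_val_rscaler !RscDr -!RscM mulrC addrACA.
have Fu' := multilinear_contract p z Fu; have Fv' := multilinear_contract q z Fv.
by rewrite !IH // !RscDr -!RscM mulrC addrACA.
Qed.

Hypothesis g_symmetric : form_symmetric g.

Lemma wedge_val_symbol l p q u v : cochain p u -> cochain q v ->
  has_symbol (fun z => wedge_val (rcons l z) p q u v).
Proof.
elim: l p q u v => [|x l IH] p q u v Cu Cv; last first.
  by apply: has_symbol_comb; apply: IH => //; exact: cochain_contract.
case: Cu => Hu _ Du _; case: Cv => Hv _ Dv _.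
have [H2|H2] := eqVneq (p + q)%N 2; last first.
  apply: (has_symbol_ext _ has_symbol0) => z.
  by rewrite wedge_val_off //= eq_sym.
case: p H2 Hu Du => [|[|[|p]]]; case: q Hv Dv => [|[|[|q]]] Hv Dv H2 Hu Du;
  try (exfalso; lia).
- apply: (has_symbol_ext _ (has_symbolZ u.1 (Dv [::]))) => z.
  by rewrite wedge_val_deg0l.
- (* the map a |-> <v, a> u - <u, a> v is skew for the symmetric form *)
  exists (fun _ => 0); split; first by split => *; rewrite ?mulr0 ?mul0r ?addr0.
  move=> a b /=; rewrite expr1 !RscN1 !formDl !formDr !formNl !formNr !formZl !formZr.
  by rewrite (g_symmetric a (u.2 [::])) (g_symmetric a (v.2 [::])); ring.
- apply: (has_symbol_ext _ (has_symbolZ v.1 (Du [::]))) => z.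
  by rewrite wedge_val_deg0r.
Qed.

Hypothesis g_nondegenerate : strongly_nondegenerate g.

(* The swap rule only constrains dcontract after pairing with the form;
   strong nondegeneracy turns this into an equality of vectors. *)
Lemma contract_dcontract p x y z u : cochain p u ->
  contract p.-2 z (dcontract p x y u) = dcontract p.-1 x y (contract p z u).
Proof.
case=> _ _ _ Su.
case: p Su => [|[|[|[|p]]]] Su; try by rewrite /= !dcontract_small.
- apply: raw_ext => /=; last by move=> *; rewrite addr0.
  by have := Su [::] [::] x y z; rewrite /= => ->.
- apply: raw_ext => /= [|m]; first by rewrite addr0.
  apply: g_nondegenerate.1 => w.
  by have := Su [::] (z :: m) x y w; have := Su [:: z] m x y w; rewrite /= => -> ->.
Qed.

Lemma wedge_val_dcontract_deg3 p q x y w u v : (p + q)%N = 3 ->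
  cochain p u -> cochain q v ->
  g (wedge_val [::] p.-2 q (dcontract p x y u) v + wedge_val [::] p q.-2 u (dcontract q x y v)) w
  = g (wedge_val [:: w; x] p q u v) y + g (wedge_val [:: w; y] p q u v) x.
Proof.
move=> H3 [Hu _ _ Su] [Hv _ _ Sv].
case: p H3 Hu Su => [|[|[|[|p]]]] H3 Hu Su;
  case: q H3 Hv Sv => [|[|[|[|q]]]] H3 Hv Sv; try (exfalso; lia).
- rewrite [dcontract 0 _ _ _]dcontract_small // wedge_val_rzerol add0r.
  rewrite !(@wedge_val_deg0l [:: w; _]) // /dcontract /= !formZl -mulrDr.
  by congr (_ * _); exact: (Sv [::] [::] x y w).
- rewrite [dcontract 1 _ _ _]dcontract_small // wedge_val_rzerol add0r /dcontract /=.
  rewrite ?expr0 expr1 expr2 mulrNN mulr1 !Rsc0 ?addr0 ?add0r !Rsc1 !RscN1.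
  do 4 rewrite ?formDl ?formNl ?formZl.
  set a1 := g (u.2 [::]) w; set a2 := g (u.2 [::]) x; set a3 := g (u.2 [::]) y.
  set b1 := g (v.2 [:: x]) y; set b2 := g (v.2 [:: y]) x.
  set b3 := g (v.2 [:: w]) y; set b4 := g (v.2 [:: w]) x.
  by clearbody a1 a2 a3 b1 b2 b3 b4; ring.
- rewrite [dcontract 1 _ _ _]dcontract_small // wedge_val_rzeror addr0 /dcontract /=.
  rewrite ?expr0 expr1 !Rsc1 !RscN1 ?addr0.
  do 4 rewrite ?formDl ?formNl ?formZl.
  set a1 := g (u.2 [:: x]) y; set a2 := g (u.2 [:: y]) x; set a3 := g (u.2 [:: w]) x.
  set a4 := g (u.2 [:: w]) y; set b1 := g (v.2 [::]) w; set b2 := g (v.2 [::]) x.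
  set b3 := g (v.2 [::]) y.
  by clearbody a1 a2 a3 a4 b1 b2 b3; ring.
- rewrite [dcontract 0 _ _ _]dcontract_small // wedge_val_rzeror addr0.
  rewrite !(@wedge_val_deg0r [:: w; _]) // /dcontract /= !formZl -mulrDr.
  by congr (_ * _); exact: (Su [::] [::] x y w).
Qed.

Lemma wedge_val_dcontract l p q x y w u v : cochain p u -> cochain q v ->
  g (wedge_val l p.-2 q (dcontract p x y u) v + wedge_val l p q.-2 u (dcontract q x y v)) w
  = g (wedge_val (l ++ [:: w; x]) p q u v) y + g (wedge_val (l ++ [:: w; y]) p q u v) x.
Proof.
elim: l p q u v => [|z l IH] p q u v Cu Cv.
  have [H3|H3] := eqVneq (p + q)%N 3; first exact: wedge_val_dcontract_deg3.
  have Zu : wedge_val [::] p.-2 q (dcontract p x y u) v = 0.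
    case: (ltnP p 2) => Hp; first by rewrite dcontract_small // wedge_val_rzerol.
    by apply: wedge_val_off; rewrite /= -subn2; lia.
  have Zv : wedge_val [::] p q.-2 u (dcontract q x y v) = 0.
    case: (ltnP q 2) => Hq; first by rewrite dcontract_small // wedge_val_rzeror.
    by apply: wedge_val_off; rewrite /= -subn2; lia.
  by rewrite Zu Zv addr0 !wedge_val_off ?form0l ?addr0 //= eq_sym.
have sign_dcontract :
    Rsc ((-1) ^+ q.-2) (wedge_val l p.-1 q.-2 (contract p z u) (dcontract q x y v))
    = Rsc ((-1) ^+ q) (wedge_val l p.-1 q.-2 (contract p z u) (dcontract q x y v)).
  case: q {Cv IH} => [|[|q]]; try by rewrite dcontract_small // wedge_val_rzeror !Rsc0.
  by rewrite /= !exprS !mulN1r opprK.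
rewrite /= (contract_dcontract x y z Cu) (contract_dcontract x y z Cv) sign_dcontract.
have IHu := IH _ _ _ _ (cochain_contract z Cu) Cv.
have IHv := IH _ _ _ _ Cu (cochain_contract z Cv).
by rewrite addrACA -RscDr [LHS]formDl formRl IHu IHv !formDl !formRl; ring.
Qed.

Lemma wedge_val_swap_rule l1 p q u v : cochain p u -> cochain q v ->
  swap_rule l1 (fun l => wedge_val l p q u v).
Proof.
elim: l1 p q u v => [|z l1 IH] p q u v Cu Cv l2 x y w.
  by rewrite !cat0s wedge_val_symmetrize wedge_val_dcontract.
have IHu := IH _ _ _ _ (cochain_contract z Cu) Cv l2 x y w.
have IHv := IH _ _ _ _ Cu (cochain_contract z Cv) l2 x y w.
rewrite /= in IHu IHv *.
by rewrite addrACA -RscDr [LHS]formDl formRl IHu IHv !formDl !formRl; ring.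
Qed.

Lemma cochain_wedge_hom p q u v : cochain p u -> cochain q v ->
  cochain (p + q) (wedge_hom p q u v).
Proof.
move=> Cu Cv; split.
- exact: homog_wedge_hom.
- by apply: wedge_val_multilinear; [case: Cu | case: Cv].
- by move=> l; apply: wedge_val_symbol.
- by move=> l1; apply: wedge_val_swap_rule.
Qed.

Lemma cochain_small n C : (n < 2)%N -> homog n C -> cochain n C.
Proof.
move=> Hn [H1 H2].
have C0 l : (0 < size l)%N -> C.2 l = 0.
  by move=> Hl; apply: H2; apply/eqP => Hsz; move: Hn; rewrite -Hsz; lia.
split.
- by split.
- by move=> l1 l2 c x y; rewrite !C0 ?size_cat //= ?addnS // Rsc0 addr0.
- by move=> l; apply: (has_symbol_ext _ has_symbol0) => z; rewrite C0 // size_rcons.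
- by move=> l1 l2 x y w; rewrite !C0 ?size_cat //= ?addnS // addr0 !form0l addr0.
Qed.

Lemma isC_cochain n C : isC g n C -> cochain n C.
Proof.
case: n => [|[|n]] /=.
- by move=> H; apply: cochain_small => //; split => // l _; apply: H.
- by move=> [H1 [H2 _]]; apply: cochain_small.
move=> [H1 [H2 /(_ isT) [ML [s [MD [Ds [S1 S2]]]]]]].
split; first by split.
- move=> l1 l2 c x y.
  have [Hs|Hs] := eqVneq (size l1 + size l2).+1 (n.+2 - 1)%N; first exact: ML.
  by rewrite !H2 ?size_cat //= ?addnS -?subn1 ?Rsc0 ?addr0 //; lia.
- move=> l; have [Hs|Hs] := eqVneq (size l).+2 n.+2.
    by exists (s l); split; [exact: Ds | move=> a b; rewrite S1].
  by apply: (has_symbol_ext _ has_symbol0) => z; rewrite H2 // size_rcons.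
- move=> l1 l2 x y w.
  have [Hs|Hs] := eqVneq (size l1 + size l2).+3 n.+2.
    rewrite S2 // S1; last by rewrite size_cat size_rcons; lia.
    by rewrite (g_symmetric x) -!cats1 -!catA.
  by rewrite !H2 ?size_cat //= ?addnS ?addr0 ?form0l ?addr0 //; lia.
Qed.

Hypothesis g_full : form_full g.

Lemma derivationD (d : A -> A) : derivation d -> {morph d : a b / a + b}.
Proof. by case=> L _ a b; have := L 1 a b; rewrite scale1r !mul1r. Qed.

Lemma additive_eq_on_form (d1 d2 : A -> A) :
  {morph d1 : a b / a + b} -> {morph d2 : a b / a + b} ->
  (forall a b, d1 (g a b) = d2 (g a b)) -> d1 =1 d2.
Proof.
move=> D1 D2 H a; have [s ->] := g_full a.
have d1_0 : d1 0 = 0 by apply: (addrI (d1 0)); rewrite -D1 !addr0.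
have d2_0 : d2 0 = 0 by apply: (addrI (d2 0)); rewrite -D2 !addr0.
elim: s => [|pr s IH]; first by rewrite !big_nil d1_0 d2_0.
by rewrite !big_cons D1 D2 IH H.
Qed.

Lemma cochain_isC n C : cochain n C -> isC g n C.
Proof.
case=> [[H1 H2] F D S].
case: n H1 H2 => [|k] H1 H2 /=; first by move=> l; apply: H2.
split; first exact: H1; split; first exact: H2.
move=> _; split; first by move=> l1 l2 c x y _; apply: F.
(* A symbol is chosen for each argument list separately; it is multilinear
   in the list because, the form being full, a derivation is determined by
   its values on the <a, b>. *)
pose s l := proj1_sig (constructive_indefinite_description _ (D l)).
have sP l : derivation (s l) /\
    forall a b, s l (g a b) = g (C.2 (rcons l a)) b + g a (C.2 (rcons l b)).
  exact: (proj2_sig (constructive_indefinite_description _ (D l))).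
exists s; split; [|split; [|split]].
- move=> l1 l2 c x y a _.
  have [Dd Hd] := sP (l1 ++ (Rsc c x + y) :: l2).
  have [Dx Hx] := sP (l1 ++ x :: l2); have [Dy Hy] := sP (l1 ++ y :: l2).
  pose d a := c%:A * s (l1 ++ x :: l2) a + s (l1 ++ y :: l2) a.
  apply: (@additive_eq_on_form _ d (derivationD Dd)) => [a1 b1|a1 b1].
    by rewrite /d (derivationD Dx) (derivationD Dy); ring.
  by rewrite /d Hd Hx Hy !rcons_cat /= !F !formDl !formDr !formRl !formRr; ring.
- by move=> l _; case: (sP l).
- by move=> l u w _; case: (sP l) => _ ->.
- move=> l1 l2 x y u _; case: (sP (l1 ++ rcons l2 u)) => _ ->.
  by rewrite S (g_symmetric x) -!cats1 -!catA.
Qed.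

(** * The product on C^•(E) *)

Definition component (i : nat) (u : Raw) : Raw :=
  if i is k.+1 then (0, fun l => if size l == k then u.2 l else 0) else inA E u.1.

Definition wedge (u v : Raw) : Raw :=
  (u.1 * v.1, fun l => \sum_(i < (size l).+2)
     wedge_val l i ((size l).+1 - i) (component i u) (component ((size l).+1 - i) v)).

Lemma homog_component i u : homog i (component i u).
Proof. by case: i => [|k]; split => //= l Hl; case: eqP => // Hs; rewrite Hs eqxx in Hl. Qed.

Lemma component_homog p i u : homog p u -> component i u = if i == p then u else rz.
Proof.
case=> H1 H2; case: i => [|k] /=.
  case: eqP => [Hp|/eqP Hp]; last by apply: raw_ext => //=; rewrite H1 // eq_sym.
  by subst p; apply: raw_ext => //= l; rewrite H2.
case: eqP => [Hp|/eqP Hp]; apply: raw_ext => //=; try move=> l.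
- by subst p; rewrite H1.
- by case: eqP => //= Hl; subst p; rewrite H2 // eqSS; apply/eqP.
- by case: eqP => //= Hl; rewrite H2 // Hl.
Qed.

Lemma sum_ord_eq (V : nmodType) m p (X : V) :
  \sum_(i < m) (if (i : nat) == p then X else 0) = if (p < m)%N then X else 0.
Proof.
elim: m => [|m IH]; first by rewrite big_ord0.
rewrite big_ord_recr /= IH ltnS.
by case: (ltngtP p m) => H; rewrite ?addr0 ?add0r // ?ltnW // leqNgt H.
Qed.

Lemma wedge_homog p q u v : homog p u -> homog q v -> wedge u v = wedge_hom p q u v.
Proof.
move=> Hu Hv; apply: raw_ext => [|l] /=.
  case: p Hu => [|p] [H1 _]; last by rewrite H1 // mul0r.
  by case: q Hv => [|q] [H2 _] //; rewrite H2 // mulr0.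
rewrite (eq_bigr (fun i : 'I_(size l).+2 => if (i : nat) == p then
   (if ((size l).+1 - p == q)%N then wedge_val l p q u v else 0) else 0)); last first.
  move=> i _; rewrite !(component_homog _ Hu) !(component_homog _ Hv).
  case: eqP => [->|_]; last by rewrite wedge_val_rzerol.
  by case: eqP => [->|_]; rewrite ?wedge_val_rzeror.
rewrite sum_ord_eq; have [Hs|Hs] := eqVneq (size l).+1 (p + q)%N.
  have -> : ((size l).+1 - p == q)%N by apply/eqP; lia.
  by have -> : (p < (size l).+2)%N by lia.
by rewrite wedge_val_off //; case: ifP => //; case: ifP.
Qed.

Lemma component_rzero i : component i rz = rz.
Proof. by case: i => [|k] //; apply: raw_ext => //= l; case: ifP. Qed.

Lemma component_radd i u v : component i (radd u v) = radd (component i u) (component i v).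
Proof.
by case: i => [|k]; apply: raw_ext => //= *; rewrite ?addr0 //; case: ifP; rewrite ?addr0.
Qed.

Lemma component_rscale i c u : component i (rscale c u) = rscale c (component i u).
Proof.
by case: i => [|k]; apply: raw_ext => //= *; rewrite ?mulr0 ?Rsc0 //; case: ifP; rewrite ?Rsc0.
Qed.

Lemma wedge_rzerol v : wedge rz v = rz.
Proof.
apply: raw_ext => [|l] /=; first by rewrite mul0r.
by rewrite big1 // => i _; rewrite component_rzero wedge_val_rzerol.
Qed.

Lemma wedge_rzeror u : wedge u rz = rz.
Proof.
apply: raw_ext => [|l] /=; first by rewrite mulr0.
by rewrite big1 // => i _; rewrite component_rzero wedge_val_rzeror.
Qed.

Lemma wedge_raddl u1 u2 v : wedge (radd u1 u2) v = radd (wedge u1 v) (wedge u2 v).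
Proof.
apply: raw_ext => [|l] /=; first by rewrite mulrDl.
by rewrite -big_split /=; apply: eq_bigr => i _; rewrite component_radd wedge_val_raddl.
Qed.

Lemma wedge_raddr u v1 v2 : wedge u (radd v1 v2) = radd (wedge u v1) (wedge u v2).
Proof.
apply: raw_ext => [|l] /=; first by rewrite mulrDr.
by rewrite -big_split /=; apply: eq_bigr => i _; rewrite component_radd wedge_val_raddr.
Qed.

Lemma wedge_rscalel c u v : wedge (rscale c u) v = rscale c (wedge u v).
Proof.
apply: raw_ext => [|l] /=; first by rewrite mulrA.
by rewrite /Rsc scaler_sumr; apply: eq_bigr => i _; rewrite component_rscale wedge_val_rscalel.
Qed.

Lemma wedge_rscaler c u v : wedge u (rscale c v) = rscale c (wedge u v).
Proof.
apply: raw_ext => [|l] /=; first by rewrite mulrCA.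
by rewrite /Rsc scaler_sumr; apply: eq_bigr => i _; rewrite component_rscale wedge_val_rscaler.
Qed.

Definition vanish_from (N : nat) (u : Raw) := forall l, (N <= size l)%N -> u.2 l = 0.

Fixpoint rsum (n : nat) (F : nat -> Raw) : Raw :=
  if n is k.+1 then radd (rsum k F) (F k) else rz.

Lemma rsum_components u N : vanish_from N u -> u = rsum N.+1 (component^~ u).
Proof.
have rsumE m : (rsum m (component^~ u)).1 = (if (0 < m)%N then u.1 else 0) /\
    forall l, (rsum m (component^~ u)).2 l = if ((size l).+1 < m)%N then u.2 l else 0.
  elim: m => [|m [IH1 IH2]] //=; split.
    by rewrite IH1; case: m {IH1 IH2} => [|m] /=; rewrite ?add0r ?addr0.
  move=> l; rewrite IH2; case: m {IH1 IH2} => [|m] /=; first by rewrite addr0.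
  case: eqP => [->|/eqP Hs]; first by rewrite ltnn add0r ltnSn.
  by rewrite addr0; congr (if _ then _ else _); apply/idP/idP; lia.
move=> Hu; have [rsum1 rsum2] := rsumE N.+1; apply: raw_ext => [|l]; first by rewrite rsum1.
by rewrite rsum2 ltnS; case: ltnP => // Hl; rewrite Hu.
Qed.

Definition radd_closed (P : Raw -> Prop) := P rz /\ forall a b, P a -> P b -> P (radd a b).

Definition additive_on (P : Raw -> Prop) (f : Raw -> Raw) :=
  f rz = rz /\ forall a b, P a -> P b -> f (radd a b) = radd (f a) (f b).

Lemma additive_rsum P f n F : radd_closed P -> additive_on P f -> (forall i, P (F i)) ->
  f (rsum n F) = rsum n (fun i => f (F i)).
Proof.
move=> [P0 PD] [f0 fD] PF; elim: n => //= n IH.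
have Pn : P (rsum n F) by elim: n {IH} => //= n IH; apply: PD.
by rewrite fD // IH.
Qed.

Lemma additive_component_ext P f h u N : radd_closed P -> (forall i, P (component i u)) ->
  additive_on P f -> additive_on P h -> vanish_from N u ->
  (forall i, f (component i u) = h (component i u)) -> f u = h u.
Proof.
move=> PC Pu Af Ah Hu H; rewrite (rsum_components Hu).
by rewrite (additive_rsum _ PC Af) // (additive_rsum _ PC Ah) //; elim: N.+1 => //= n ->; rewrite H.
Qed.

Lemma wedge_assoc u v w : inCdot g u -> inCdot g v -> inCdot g w ->
  wedge (wedge u v) w = wedge u (wedge v w).
Proof.
move=> [[Nu Hu] _] [[Nv Hv] _] [[Nw Hw] _].
have TC : radd_closed (fun _ => True) by [].
apply: (@additive_component_ext _ (fun a => wedge (wedge a v) w)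
          (fun a => wedge a (wedge v w)) u Nu TC) => //.
- by split=> [|a b _ _]; rewrite ?wedge_rzerol ?wedge_raddl.
- by split=> [|a b _ _]; rewrite ?wedge_rzerol ?wedge_raddl.
move=> i; apply: (@additive_component_ext _ (fun b => wedge (wedge (component i u) b) w)
          (fun b => wedge (component i u) (wedge b w)) v Nv TC) => //.
- by split=> [|a b _ _]; rewrite ?wedge_rzeror ?wedge_rzerol ?wedge_raddr ?wedge_raddl.
- by split=> [|a b _ _]; rewrite ?wedge_rzerol ?wedge_rzeror ?wedge_raddl ?wedge_raddr.
move=> j; apply: (@additive_component_ext _ (wedge (wedge (component i u) (component j v)))
          (fun c => wedge (component i u) (wedge (component j v) c)) w Nw TC) => //.
- by split=> [|a b _ _]; rewrite ?wedge_rzeror ?wedge_raddr.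
- by split=> [|a b _ _]; rewrite ?wedge_rzeror ?wedge_raddr.
move=> k; rewrite !(wedge_homog (homog_component _ _) (homog_component _ _)).
rewrite (wedge_homog (homog_wedge_hom _ _ _ _) (homog_component _ _)).
rewrite (wedge_homog (homog_component _ _) (homog_wedge_hom _ _ _ _)).
exact: wedge_hom_assoc.
Qed.

Lemma isC_homog n C : isC g n C -> homog n C.
Proof. by move/isC_cochain; case. Qed.

Lemma isC_inCdot n C : isC g n C -> inCdot g C.
Proof.
move=> HC; have [_ H2] := isC_homog HC; split.
  by exists n => l Hl; apply: H2; apply/eqP; lia.
move=> k; change (isC g k.+1 (component k.+1 C)); rewrite (component_homog _ (isC_homog HC)).
by case: eqP => [->|_] //; apply: cochain_isC; exact: cochain_rzero.
Qed.

Lemma inCdot_component_isC i u : inCdot g u -> isC g i (component i u).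
Proof. by case: i => [|k] [_ H]. Qed.

Lemma inCdot_radd_closed : radd_closed (inCdot g).
Proof.
split; first exact: (@isC_inCdot 0 _ (cochain_isC (cochain_rzero 0))).
move=> u v [[Nu Bu] Cu] [[Nv Bv] Cv]; split.
  by exists (maxn Nu Nv) => l Hl /=; rewrite Bu ?Bv ?addr0 //; lia.
move=> k; change (isC g k.+1 (component k.+1 (radd u v))); rewrite component_radd.
by apply/cochain_isC/cochain_radd; apply: isC_cochain; [exact: (Cu k) | exact: (Cv k)].
Qed.

Lemma isC_wedge r s u v : isC g r u -> isC g s v -> isC g (r + s) (wedge u v).
Proof.
move=> Hu Hv; rewrite (wedge_homog (isC_homog Hu) (isC_homog Hv)).
by apply/cochain_isC/cochain_wedge_hom; exact: isC_cochain.
Qed.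

Lemma wedge_comm r s u v : isC g r u -> isC g s v ->
  wedge u v = rscale ((-1) ^+ (r * s)) (wedge v u).
Proof.
move=> Hu Hv; rewrite (wedge_homog (isC_homog Hu) (isC_homog Hv)).
by rewrite (wedge_homog (isC_homog Hv) (isC_homog Hu)); exact: wedge_hom_comm.
Qed.

Lemma homog_inA a : homog 0 (inA E a).
Proof. by []. Qed.

Lemma homog_inE x : homog 1 (Defs.inE x).
Proof. by split => // -[|z l]. Qed.

Lemma homog0_inA u : homog 0 u -> u = inA E u.1.
Proof. by case=> _ H; apply: raw_ext => //= l; apply: H. Qed.

Lemma homog1_inE u : homog 1 u -> u = Defs.inE (u.2 [::]).
Proof. by case=> H1 H2; apply: raw_ext => /= [|[|z l]] //; [apply: H1 | apply: H2]. Qed.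

Lemma wedge_inA_inA a b : wedge (inA E a) (inA E b) = inA E (a * b).
Proof.
rewrite (wedge_homog (homog_inA _) (homog_inA _)).
by apply: raw_ext => //= l; rewrite wedge_val_off.
Qed.

Lemma wedge_inA_inE a x : wedge (inA E a) (Defs.inE x) = Defs.inE (a *: x).
Proof.
rewrite (wedge_homog (homog_inA _) (homog_inE _)).
by apply: raw_ext => //= -[|z l] //; rewrite wedge_val_off.
Qed.

Lemma wedge_inE_inA a x : wedge (Defs.inE x) (inA E a) = Defs.inE (a *: x).
Proof.
rewrite (wedge_homog (homog_inE _) (homog_inA _)).
by apply: raw_ext => //= -[|z l] //; rewrite wedge_val_off.
Qed.

Lemma homog_contract_inj n u v : (2 <= n)%N -> homog n u -> homog n v ->
  (forall x, contract n x u = contract n x v) -> u = v.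
Proof.
case: n => [|[|n]] // _ [Hu1 Hu2] [Hv1 Hv2] H.
apply: raw_ext => [|[|x l]]; first by rewrite Hu1 ?Hv1.
  by rewrite Hu2 ?Hv2.
by have := congr1 (fun w => w.2 l) (H x).
Qed.

(** * The bracket and uniqueness *)

Variable br : Raw -> Raw -> Raw.
Hypothesis br_is_bracket : is_bracket g br.

Lemma br_inE r C x : isC g r C -> br C (Defs.inE x) = contract r x C.
Proof.
have [_ [_ [_ [_ [brAE [brEE [_ [brCE _]]]]]]]] := br_is_bracket.
case: r => [|[|r]] HC.
- by rewrite (homog0_inA (isC_homog HC)) (brAE C.1 x).1.
- by rewrite (homog1_inE (isC_homog HC)) brEE.
- by rewrite (brCE r.+2 C x isT HC).1.
Qed.

Lemma wedge_derivation_rule r s C1 C2 x : isC g r C1 -> isC g s C2 ->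
  br (wedge C1 C2) (Defs.inE x)
  = radd (rscale ((-1) ^+ s) (wedge (br C1 (Defs.inE x)) C2)) (wedge C1 (br C2 (Defs.inE x))).
Proof.
move=> H1 H2; have [hom1 hom2] := (isC_homog H1, isC_homog H2).
rewrite (br_inE x (isC_wedge H1 H2)) (wedge_homog hom1 hom2) contract_wedge_hom.
rewrite (br_inE x H1) (br_inE x H2).
by rewrite (wedge_homog (homog_contract x hom1) hom2) (wedge_homog hom1 (homog_contract x hom2)).
Qed.

Lemma is_wedge_wedge : is_wedge g br wedge.
Proof.
split; first by move=> c u v w _ _ _; rewrite wedge_raddl wedge_rscalel wedge_raddr wedge_rscaler.
split; first exact: isC_wedge.
split; first exact: wedge_assoc.
split; first exact: wedge_comm.
split; first by move=> a b; rewrite wedge_inA_inA mulrC wedge_inA_inA.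
split; first by move=> a x; rewrite wedge_inA_inE wedge_inE_inA.
exact: wedge_derivation_rule.
Qed.

Section Uniqueness.
Variable wd : Raw -> Raw -> Raw.
Hypothesis wd_is_wedge : is_wedge g br wd.

Lemma is_wedge_radd a b c : inCdot g a -> inCdot g b -> inCdot g c ->
  wd (radd a b) c = radd (wd a c) (wd b c) /\ wd c (radd a b) = radd (wd c a) (wd c b).
Proof. by move=> Ha Hb Hc; have := wd_is_wedge.1 1 a b c Ha Hb Hc; rewrite !rscale1. Qed.

Lemma is_wedge_rzero c : inCdot g c -> wd rz c = rz /\ wd c rz = rz.
Proof.
have [P0 _] := inCdot_radd_closed.
move=> Hc; have [E1 E2] := is_wedge_radd P0 P0 Hc; rewrite radd_rzero in E1 E2.
by split; apply: radd_idem.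
Qed.

Lemma is_wedge_low_degree i j a b : (i + j < 2)%N -> homog i a -> homog j b ->
  wd a b = wedge_hom i j a b.
Proof.
have [_ [_ [_ [_ [wdAA [wdAE _]]]]]] := wd_is_wedge.
case: i j => [|[|i]] [|[|j]] // _ Ha Hb.
- rewrite (homog0_inA Ha) (homog0_inA Hb) (wdAA a.1 b.1).1.
  by apply: raw_ext => //= l; rewrite wedge_val_off.
- rewrite (homog0_inA Ha) (homog1_inE Hb) (wdAE a.1 (b.2 [::])).1.
  by apply: raw_ext => //= -[|z l] //; rewrite wedge_val_off.
- rewrite (homog1_inE Ha) (homog0_inA Hb) (wdAE b.1 (a.2 [::])).2.
  by apply: raw_ext => //= -[|z l] //; rewrite wedge_val_off.
Qed.

Lemma is_wedge_homog i j a b : cochain i a -> cochain j b -> wd a b = wedge_hom i j a b.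
Proof.
have [_ [wd_deg [_ [_ [_ [_ wd_rule]]]]]] := wd_is_wedge.
have [n] := ubnP (i + j); elim: n i j a b => // n IH i j a b Hij Ca Cb.
have [Ia Ib] := (cochain_isC Ca, cochain_isC Cb).
have [Hn2|Hn2] := leqP 2 (i + j); last by apply: is_wedge_low_degree; case: Ca; case: Cb.
have Iab := wd_deg _ _ _ _ Ia Ib.
apply: (homog_contract_inj Hn2 (isC_homog Iab) (homog_wedge_hom _ _ _ _)) => x.
rewrite -(br_inE x Iab) (wd_rule _ _ _ _ x Ia Ib) (br_inE x Ia) (br_inE x Ib) contract_wedge_hom.
have IHa : wd (contract i x a) b = wedge_hom i.-1 j (contract i x a) b.
  case: i {Ia Iab Hn2} Hij Ca => [|i] Hij Ca.
    by rewrite /= (is_wedge_rzero (isC_inCdot Ib)).1 wedge_hom_rzerol.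
  by apply: (IH _ _ _ _ _ (cochain_contract x Ca) Cb); rewrite /=; lia.
have IHb : wd a (contract j x b) = wedge_hom i j.-1 a (contract j x b).
  case: j {Ib Iab Hn2 IHa} Hij Cb => [|j] Hij Cb.
    by rewrite /= (is_wedge_rzero (isC_inCdot Ia)).2 wedge_hom_rzeror.
  by apply: (IH _ _ _ _ _ Ca (cochain_contract x Cb)); lia.
by rewrite IHa IHb.
Qed.

Lemma is_wedge_unique u v : inCdot g u -> inCdot g v -> wd u v = wedge u v.
Proof.
move=> Hu Hv; have [[Nu Bu] _] := Hu; have [[Nv Bv] _] := Hv.
have Pc w i : inCdot g w -> inCdot g (component i w).
  by move=> Hw; exact: isC_inCdot (inCdot_component_isC i Hw).
apply: (@additive_component_ext _ (wd^~ v) (wedge^~ v) u Nu inCdot_radd_closed) => //.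
- by move=> i; exact: Pc.
- by split=> [|a b Ha Hb]; [case: (is_wedge_rzero Hv) | case: (is_wedge_radd Ha Hb Hv)].
- by split=> [|a b _ _]; rewrite ?wedge_rzerol ?wedge_raddl.
move=> i; have Hi := Pc u i Hu.
apply: (@additive_component_ext _ (wd (component i u)) (wedge (component i u)) v Nv
          inCdot_radd_closed) => //.
- by move=> j; exact: Pc.
- by split=> [|a b Ha Hb]; [case: (is_wedge_rzero Hi) | case: (is_wedge_radd Ha Hb Hi)].
- by split=> [|a b _ _]; rewrite ?wedge_rzeror ?wedge_raddr.
move=> j; rewrite (wedge_homog (homog_component _ _) (homog_component _ _)).
by apply: is_wedge_homog; apply: isC_cochain; exact: inCdot_component_isC.
Qed.

End Uniqueness.

End Wedge.

Theorem mainTheorem7 (R : comUnitRingType) (A : comAlgType R) (E : lmodType A)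
  (g : E -> E -> A) (br : Raw A E -> Raw A E -> Raw A E) :
  Qalgebra R -> fgprojective E ->
  form_bilinear g -> form_symmetric g -> strongly_nondegenerate g -> form_full g ->
  is_bracket g br ->
  exists wd : Raw A E -> Raw A E -> Raw A E,
    is_wedge g br wd /\
    (forall wd', is_wedge g br wd' ->
       forall u v, inCdot g u -> inCdot g v -> wd' u v = wd u v).
Proof.
move=> _ _ g_bil g_sym g_nd g_full br_br.
exists (wedge g); split; first exact: (is_wedge_wedge g_bil g_sym g_nd g_full br_br).
by move=> wd' wd'_wedge u v; exact: (is_wedge_unique g_bil g_sym g_full br_br wd'_wedge).
Qed.
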